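(* Let $(R,[\cdot_\lambda\cdot],\alpha,\beta)$ be a BiHom-Lie conformal superalgebra and let $k\geq 0$ be an integer. Then $(R,[\cdot_\lambda\cdot]',\alpha^{k+1},\beta^{k+1})$, where $[a_\lambda b]'=[\alpha^k(a)_\lambda\beta^k(b)]$, is a BiHom-Lie conformal superalgebra.
   Context: All spaces are over $\mathbb{C}$. For a $\mathbb{C}[\partial]$-module $V$, $V[\lambda]=\mathbb{C}[\lambda]\otimes V$. $|a|$ denotes the parity of a homogeneous element. In $[x_{-\lambda-\partial}y]$ one writes $[x_\lambda y]=\sum_n\lambda^nc_n$ and replaces $\lambda$ by $-\lambda-\partial$, $\partial$ acting on the $c_n$. A BiHom-Lie conformal superalgebra $(R,[\cdot_\lambda\cdot],\alpha,\beta)$ is a $\mathbb{Z}_2$-graded $\mathbb{C}[\partial]$-module $R=R_0\oplus R_1$ with two commuting linear maps $\alpha,\beta:R\to R$ and a $\mathbb{C}$-linear map $R\otimes R\to R[\lambda]$, $a\otimes b\mapsto[a_\lambda b]$, with $[R_{i\,\lambda}R_j]\subseteq R_{i+j}[\lambda]$, such that for all homogeneous $a,b,c\in R$: (1) $\alpha\partial=\partial\alpha$, $\beta\partial=\partial\beta$; (2) $\alpha([a_\lambda b])=[\alpha(a)_\lambda\alpha(b)]$, $\beta([a_\lambda b])=[\beta(a)_\lambda\beta(b)]$; (3) $[(\partial a)_\lambda b]=-\lambda[a_\lambda b]$, $[a_\lambda(\partial b)]=(\partial+\lambda)[a_\lambda b]$; (4) $[\beta(a)_\lambda\alpha(b)]=-(-1)^{|a||b|}[\beta(b)_{-\lambda-\partial}\alpha(a)]$;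 (5) $[\alpha\beta(a)_\lambda[b_\mu c]]=[[\beta(a)_\lambda b]_{\lambda+\mu}\beta(c)]+(-1)^{|a||b|}[\beta(b)_\mu[\alpha(a)_\lambda c]]$. *)

From mathcomp Require Import all_boot all_algebra.
From mathcomp Require Import complex.
From mathcomp Require Import Rstruct.
Set Implicit Arguments. Unset Strict Implicit. Unset Printing Implicit Defensive.
Import GRing.Theory.
Local Open Scope ring_scope.

Definition CC : fieldType := (Rdefinitions.R)[i].

Section BiHomLCSA.
Variable V : lmodType CC.

(* An element of V[lambda] is represented by its list of coefficients
   s = [:: c_0; c_1; ...], i.e. sum_n lambda^n c_n; coefficients are read
   with [coef s n] (0 beyond the list), so trailing zeros are irrelevant. *)
Definition coef (s : seq V) (n : nat) : V := nth 0 s n.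

(* coefficient of lambda^n in  lambda * p(lambda) *)
Definition lam_mul_coef (s : seq V) (n : nat) : V :=
  if n is n'.+1 then coef s n' else 0.

(* coefficient of lambda^k in  sum_m (-lambda - d)^m c_m
   = sum_{m >= k} (-1)^m binom(m,k) d^(m-k) c_m *)
Definition subst_coef (d : V -> V) (s : seq V) (k : nat) : V :=
  \sum_(m < size s | (k <= m)%N)
     (((-1) ^+ m * ('C(m, k))%:R : CC) *: iter (m - k) d (coef s m)).

(* sign (-1)^{|a||b|} for parities i j (false = even, true = odd) *)
Definition psign (i j : bool) : CC := if i && j then -1 else 1.

Definition is_lin (f : V -> V) : Prop :=
  forall (k : CC) x y, f (k *: x + y) = k *: f x + f y.

(* (R, [._lambda .], alpha, beta) is a BiHom-Lie conformal superalgebra,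
   where R = V is a Z2-graded C[d]-module with homogeneous components
   par false (= R_0) and par true (= R_1), and br a b is [a_lambda b]. *)
Definition BiHomLCSA (par : bool -> pred V) (d : V -> V)
    (br : V -> V -> seq V) (al be : V -> V) : Prop :=
  [/\ is_lin d,
      (forall i, 0 \in par i),
      (forall i (k : CC) x y, x \in par i -> y \in par i -> k *: x + y \in par i),
      (forall x, exists x0 x1, [/\ x0 \in par false, x1 \in par true & x = x0 + x1]) &
      (forall x, x \in par false -> x \in par true -> x = 0)] /\
  (forall i x, x \in par i -> d x \in par i) /\
  [/\ is_lin al, is_lin be,
      (forall x, al (be x) = be (al x)),
      (forall i x, x \in par i -> al x \in par i) &
      (forall i x, x \in par i -> be x \in par i)] /\
  [/\ (forall (k : CC) a a' b n,
         coef (br (k *: a + a') b) n = k *: coef (br a b) n + coef (br a' b) n),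
      (forall (k : CC) a b b' n,
         coef (br a (k *: b + b')) n = k *: coef (br a b) n + coef (br a b') n) &
      (forall i j a b n, a \in par i -> b \in par j ->
         coef (br a b) n \in par (i (+) j))] /\
  (forall x, al (d x) = d (al x)) /\ (forall x, be (d x) = d (be x)) /\
  (forall a b n, al (coef (br a b) n) = coef (br (al a) (al b)) n) /\
  (forall a b n, be (coef (br a b) n) = coef (br (be a) (be b)) n) /\
  (forall a b n, coef (br (d a) b) n = - lam_mul_coef (br a b) n) /\
  (forall a b n, coef (br a (d b)) n = d (coef (br a b) n) + lam_mul_coef (br a b) n) /\
  (* axiom (4): skew-symmetry, coefficientwise in lambda *)
  (forall i j a b n, a \in par i -> b \in par j ->
     coef (br (be a) (al b)) n = - (psign i j *: subst_coef d (br (be b) (al a)) n)) /\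
  (* axiom (5): BiHom-Jacobi identity, coefficient of lambda^p mu^q *)
  (forall i j a b c p q, a \in par i -> b \in par j ->
     coef (br (al (be a)) (coef (br b c) q)) p =
       \sum_(r < p.+1)
          (('C(p - r + q, q))%:R : CC) *: coef (br (coef (br (be a) b) r) (be c)) (p - r + q)
       + psign i j *: coef (br (be b) (coef (br (al a) c) p)) q).

End BiHomLCSA.

(* Write A := alpha^k and B := beta^k, so that [a_lambda b]' = [A a_lambda B b].
   Since d, alpha and beta commute with A and B, and A, B are multiplicative, all
   axioms except (4) and (5) transfer directly.  For those, the new maps absorb
   the twist: [beta^(k+1) a_lambda alpha^(k+1) b]' = [beta(A B a)_lambda alpha(A B b)],
   so skew-symmetry for a, b is the original one for A B a, A B b; likewise the
   twisted Jacobi identity for a, b, c is the original one for A^2 B a, A B b and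
   B^2 c. *)

From mathcomp Require Import all_boot all_algebra.
From mathcomp Require Import complex.
From mathcomp Require Import Rstruct.
Set Implicit Arguments. Unset Strict Implicit.
Local Open Scope ring_scope.

Section IterComm.
Variables (T : Type) (f g : T -> T).
Hypothesis fg : forall x, f (g x) = g (f x).

Lemma iter_comm1 m x : iter m f (g x) = g (iter m f x).
Proof. by elim: m => [|m IH] //=; rewrite IH fg. Qed.

Lemma iter_comm m n x : iter m f (iter n g x) = iter n g (iter m f x).
Proof. by elim: n => [|n IH] //=; rewrite iter_comm1 IH. Qed.

End IterComm.

Lemma iter_homo (T : Type) (P : pred T) (f : T -> T) n :
  {homo f : x / x \in P} -> {homo iter n f : x / x \in P}.
Proof. by move=> fP x Px; elim: n => [|n IH] //=; apply: fP. Qed.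

Section Twist.
Variable V : lmodType CC.
Implicit Types (par : bool -> pred V) (d f al be : V -> V) (br : V -> V -> seq V).

Definition even_commuting_maps par al be :=
  [/\ is_lin al, is_lin be, (forall x, al (be x) = be (al x)),
      (forall i, {homo al : x / x \in par i}) & (forall i, {homo be : x / x \in par i})].

Definition graded_bilinear_bracket par br :=
  [/\ (forall (c : CC) a a' b n,
         coef (br (c *: a + a') b) n = c *: coef (br a b) n + coef (br a' b) n),
      (forall (c : CC) a b b' n,
         coef (br a (c *: b + b')) n = c *: coef (br a b) n + coef (br a b') n) &
      (forall i j a b n, a \in par i -> b \in par j ->
         coef (br a b) n \in par (i (+) j))].

Definition bracket_multiplicative br f :=
  forall a b n, f (coef (br a b) n) = coef (br (f a) (f b)) n.

Definition skew_symmetric par d br al be :=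
  forall i j a b n, a \in par i -> b \in par j ->
    coef (br (be a) (al b)) n = - (psign i j *: subst_coef d (br (be b) (al a)) n).

Definition bihom_jacobi par br al be :=
  forall i j a b c p q, a \in par i -> b \in par j ->
    coef (br (al (be a)) (coef (br b c) q)) p =
      \sum_(r < p.+1)
         (('C(p - r + q, q))%:R : CC) *: coef (br (coef (br (be a) b) r) (be c)) (p - r + q)
      + psign i j *: coef (br (be b) (coef (br (al a) c) p)) q.

Definition twist_bracket br al be k a b := br (iter k al a) (iter k be b).

Lemma iter_is_lin f n : is_lin f -> is_lin (iter n f).
Proof. by move=> f_lin; elim: n => [|n IH] c x y //=; rewrite IH f_lin. Qed.

Lemma iter_bracket_multiplicative br f n :
  bracket_multiplicative br f -> bracket_multiplicative br (iter n f).
Proof. by move=> f_br a b m; elim: n => [|n IH] //=; rewrite IH f_br. Qed.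

Lemma iter_even_commuting_maps par al be m n :
  even_commuting_maps par al be -> even_commuting_maps par (iter m al) (iter n be).
Proof.
case=> al_lin be_lin al_be al_par be_par; split.
- exact: iter_is_lin.
- exact: iter_is_lin.
- exact: iter_comm.
- by move=> i; apply: iter_homo.
- by move=> i; apply: iter_homo.
Qed.

Variables (par : bool -> pred V) (d : V -> V) (br : V -> V -> seq V) (al be : V -> V).
Variable k : nat.
Hypothesis al_be : forall x, al (be x) = be (al x).
Hypothesis al_par : forall i, {homo al : x / x \in par i}.
Hypothesis be_par : forall i, {homo be : x / x \in par i}.

Let be_al x : be (al x) = al (be x). Proof. by rewrite al_be. Qed.

Lemma twist_graded_bilinear_bracket :
  is_lin al -> is_lin be ->
  graded_bilinear_bracket par br -> graded_bilinear_bracket par (twist_bracket br al be k).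
Proof.
move=> al_lin be_lin [br_linl br_linr br_par].
split=> [c a a' b n | c a b b' n | i j a b n Ha Hb]; rewrite /twist_bracket.
- by rewrite (iter_is_lin _ al_lin) br_linl.
- by rewrite (iter_is_lin _ be_lin) br_linr.
- by apply: br_par; apply: iter_homo.
Qed.

Lemma twist_bracket_multiplicative f :
  (forall x, al (f x) = f (al x)) -> (forall x, be (f x) = f (be x)) ->
  bracket_multiplicative br f -> bracket_multiplicative (twist_bracket br al be k) f.
Proof.
move=> al_f be_f f_br a b n.
by rewrite /twist_bracket f_br -(iter_comm1 al_f) -(iter_comm1 be_f).
Qed.

Lemma iter_twist_al x : iter k be (iter k.+1 al x) = al (iter k al (iter k be x)).
Proof. by rewrite iterS (iter_comm1 be_al) (iter_comm be_al). Qed.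

Lemma iter_twist_be x : iter k al (iter k.+1 be x) = be (iter k al (iter k be x)).
Proof. by rewrite iterS (iter_comm1 al_be). Qed.

Lemma twist_skew_symmetric :
  skew_symmetric par d br al be ->
  skew_symmetric par d (twist_bracket br al be k) (iter k.+1 al) (iter k.+1 be).
Proof.
move=> skew i j a b n Ha Hb.
rewrite /twist_bracket !iter_twist_al !iter_twist_be.
by apply: skew; do 2 apply: iter_homo => //.
Qed.

Hypothesis al_br : bracket_multiplicative br al.
Hypothesis be_br : bracket_multiplicative br be.

Lemma twist_bracket_multiplicative_iter_al n :
  bracket_multiplicative (twist_bracket br al be k) (iter n al).
Proof.
apply: twist_bracket_multiplicative.
- exact: iterSr.
- by move=> x; rewrite (iter_comm1 al_be).
- exact: iter_bracket_multiplicative.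
Qed.

Lemma twist_bracket_multiplicative_iter_be n :
  bracket_multiplicative (twist_bracket br al be k) (iter n be).
Proof.
apply: twist_bracket_multiplicative.
- by move=> x; rewrite (iter_comm1 be_al).
- exact: iterSr.
- exact: iter_bracket_multiplicative.
Qed.

Lemma twist_bihom_jacobi :
  bihom_jacobi par br al be ->
  bihom_jacobi par (twist_bracket br al be k) (iter k.+1 al) (iter k.+1 be).
Proof.
move=> jacobi i j a b c p q Ha Hb.
pose a1 := iter k al (iter k al (iter k be a)).
pose b1 := iter k al (iter k be b).
pose c1 := iter k be (iter k be c).
have A2_be : iter k al (iter k al (iter k.+1 be a)) = be a1.
  by rewrite iterS !(iter_comm1 al_be).
have A_al_be : iter k al (iter k.+1 al (iter k.+1 be a)) = al (be a1).
  by rewrite iterS (iter_comm1 (fun=> erefl)) A2_be.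
have B_A_al : iter k be (iter k al (iter k.+1 al a)) = al a1.
  by rewrite iterS (iter_comm1 (fun=> erefl)) (iter_comm1 be_al) !(iter_comm be_al).
have B_be : iter k be (iter k.+1 be c) = be c1.
  by rewrite iterS (iter_comm1 (fun=> erefl)).
have B_A : iter k be (iter k al b) = b1 by rewrite (iter_comm be_al).
rewrite /twist_bracket !(iter_bracket_multiplicative _ be_br).
under eq_bigr => r _ do rewrite (iter_bracket_multiplicative _ al_br).
rewrite A_al_be B_A A2_be B_be iter_twist_be B_A_al.
by apply: jacobi; rewrite /a1 /b1; do 3?apply: iter_homo => //.
Qed.

End Twist.

Theorem mainTheorem3 (V : lmodType CC) (par : bool -> pred V) (d : V -> V)
    (br : V -> V -> seq V) (al be : V -> V) (k : nat) :
  BiHomLCSA par d br al be ->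
  BiHomLCSA par d (fun a b => br (iter k al a) (iter k be b))
    (iter k.+1 al) (iter k.+1 be).
Proof.
move=> [graded_module [d_even [maps [bracket [al_d [be_d [al_br [be_br [br_dl [br_dr [skew jacobi]]]]]]]]]]].
have [al_lin be_lin al_be al_par be_par] := maps.
do 2 split=> //.
split; first exact: iter_even_commuting_maps.
split; first exact: twist_graded_bilinear_bracket.
split; first exact: iter_comm1.
split; first exact: iter_comm1.
split; first exact: (twist_bracket_multiplicative_iter_al k al_be al_br k.+1).
split; first exact: (twist_bracket_multiplicative_iter_be k al_be be_br k.+1).
split; first by move=> a b n; rewrite /= (iter_comm1 al_d) br_dl.
split; first by move=> a b n; rewrite /= (iter_comm1 be_d) br_dr.
split; first exact: (twist_skew_symmetric k al_be al_par be_par).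
exact: (twist_bihom_jacobi k al_be al_par be_par al_br be_br).
Qed.
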